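(* In the standing setup, let $T$ be a valid partial table and let $T(i,b)=\emptyset$. Then either there exists a valid partial table $T'$ with strictly more nonempty positions than $T$, or there are at least $(n-|S_i|)(n-|C_b|)$ positions that are $(i,b)$-removable.
   Context: Standing setup: $M$ is a matroid of rank $n$ on ground set $E$; $f\le n$ is a positive integer; for each $i\in\{1,\dots,f\}$ and $j\in\{1,\dots,n\}$, $B_{i,j}$ is a basis of $M$, and the sets $B_{i,j}$ are pairwise disjoint. A valid partial table $T$ assigns to each position $(i,j)\in[f]\times[n]$ either the symbol $\emptyset$ (the position is empty) or an element $T(i,j)\in B_{i,j}$, such that for every row $i$ the set $S_i=\{T(i,j):T(i,j)\ne\emptyset\}$ is independent and for every column $j$ the set $C_j=\{T(i,j):T(i,j)\neq\emptyset\}$ is independent. Notation: for a set $A$ and an element $z$, ''$A+z$ is independent'' means $z\notin A$ and $A\cup\{z\}$ is independent; $A-z$ denotes $A\setminus\{z\}$ for $z\in A$; expressions such as $A-z+w$ are read left to right with the same convention. Definitions (with $T(i,b)=\emptyset$): an element $x\in B_{i,c}$ is $(i,b)$-addable if either (1) $T(i,c)=\emptyset$ and both $S_i+x$ and $C_c+x$ are independent, or (2) $T(i,c)=x'\neq\emptyset$ and there is $y\in B_{i,b}$ such that $C_b+y$ and $S_i-x'+y+x$ are independent. A position $(j,c)$ with $T(j,c)=y'\neq\emptyset$ is $(i,b)$-removable if there is an $(i,b)$-addable element $x\in B_{i,c}$ such that $C_c-y'+x$ is independent. *)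

From mathcomp Require Import all_boot.
Set Implicit Arguments. Unset Strict Implicit. Unset Printing Implicit Defensive.

Section Matroid.
Variable E : finType.
Variable indep : {set E} -> bool.

Definition matroid : Prop :=
  [/\ indep set0,
      (forall A B : {set E}, A \subset B -> indep B -> indep A) &
      (forall A B : {set E}, indep A -> indep B -> #|A| < #|B| ->
          exists2 x, x \in B :\: A & indep (x |: A))].

Definition matroid_rank (n : nat) : Prop :=
  (exists2 A, indep A & #|A| = n) /\ (forall A, indep A -> #|A| <= n).

Definition is_basis (B : {set E}) : Prop :=
  indep B /\ (forall x, x \notin B -> ~~ indep (x |: B)).

Definition addind (A : {set E}) (z : E) : bool :=
  (z \notin A) && indep (z |: A).

(* "A - w + z is independent" (w \in A): read left to right. *)
Definition swapind (A : {set E}) (w z : E) : bool :=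
  addind (A :\ w) z.

(* "A - w + y + x is independent", read left to right. *)
Definition swap2ind (A : {set E}) (w y x : E) : bool :=
  addind (A :\ w) y && addind (y |: (A :\ w)) x.

Variables f n : nat.
Variable B : 'I_f -> 'I_n -> {set E}.

(* A partial table: None is the empty symbol. *)
Definition table := 'I_f -> 'I_n -> option E.

Definition row_set (T : table) (i : 'I_f) : {set E} :=
  [set x | [exists j, T i j == Some x]].
Definition col_set (T : table) (j : 'I_n) : {set E} :=
  [set x | [exists i, T i j == Some x]].

Definition valid_table (T : table) : Prop :=
  [/\ (forall i j x, T i j = Some x -> x \in B i j),
      (forall i, indep (row_set T i)) &
      (forall j, indep (col_set T j))].

Definition num_filled (T : table) : nat :=
  #|[set p : 'I_f * 'I_n | T p.1 p.2 != None]|.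

Definition addable (T : table) (i : 'I_f) (b : 'I_n) (c : 'I_n) (x : E) : Prop :=
  x \in B i c /\
  match T i c with
  | None => addind (row_set T i) x /\ addind (col_set T c) x
  | Some x' => exists2 y, y \in B i b &
                 addind (col_set T b) y /\ swap2ind (row_set T i) x' y x
  end.

Definition removable (T : table) (i : 'I_f) (b : 'I_n) (j : 'I_f) (c : 'I_n) : Prop :=
  exists y', T j c = Some y' /\
    exists2 x, addable T i b c x & swapind (col_set T c) y' x.

End Matroid.

From mathcomp Require Import all_boot boolp.
Set Implicit Arguments. Unset Strict Implicit. Unset Printing Implicit Defensive.

(* If no valid table has more filled positions, then no element y of B_{i,b}
   addable to column b can be added to S_i, since it could be written at (i,b).
   An exchange argument turns the at least n - |C_b| such y into as many
   columns c whose row-i entry x' can be traded for one of them.  In such a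
   column, an element x of B_{i,c} addable to S_i - x' + y cannot be added to
   C_c either (writing x at (i,c) and y at (i,b) would enlarge the table), and
   the same exchange argument turns the at least n - |S_i| such x into as many
   entries of column c that some x can replace: these positions are removable. *)

Section MatroidCounting.
Variables (E : finType) (indep : {set E} -> bool).
Hypothesis hM : matroid indep.

Lemma indep_subset (A C : {set E}) : A \subset C -> indep C -> indep A.
Proof. by case: hM => _ + _; apply. Qed.

Lemma indep_augment (A C : {set E}) : indep A -> indep C -> #|A| < #|C| ->
  exists2 x, x \in C :\: A & indep (x |: A).
Proof. by case: hM => _ _; apply. Qed.

Lemma indep_extend (I J : {set E}) : indep I -> indep J -> #|J| <= #|I| ->
  exists J' : {set E}, [/\ J \subset J', J' \subset J :|: I, indep J' & #|J'| = #|I|].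
Proof.
move=> indI; move def_k: (#|I| - #|J|) => k.
elim: k J def_k => [|k IHk] J def_k indJ leJI.
  exists J; split; rewrite ?subxx ?subsetUl //.
  by apply/eqP; rewrite eqn_leq leJI -subn_eq0 def_k.
have ltJI : #|J| < #|I| by rewrite -subn_gt0 def_k.
have [x /setDP [xI xJ] indxJ] := indep_augment indJ indI ltJI.
have cardxJ : #|x |: J| = #|J|.+1 by rewrite cardsU1 xJ.
have [||J' [sxJJ' sJ' indJ' cardJ']] := IHk (x |: J) _ indxJ.
- by rewrite cardxJ subnS def_k.
- by rewrite cardxJ -subn_gt0 def_k.
exists J'; split => //; first exact: subset_trans (subsetUr _ _) sxJJ'.
apply: (subset_trans sJ'); apply/subsetP => z; rewrite !inE -orbA.
by case/or3P => [/eqP-> | -> | ->]; rewrite ?xI ?orbT.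
Qed.

Lemma leq_card_addind (J C : {set E}) : indep J -> indep C ->
  #|C| - #|J| <= #|[set x in C | addind indep J x]|.
Proof.
move=> indJ indC; have [leCJ|/ltnW leJC] := leqP #|C| #|J|.
  by move: leCJ; rewrite -subn_eq0 => /eqP->.
have [J' [sJJ' sJ'JC indJ' cardJ']] := indep_extend indC indJ leJC.
have -> : #|C| - #|J| = #|J' :\: J| by rewrite cardsD (setIidPr sJJ') cardJ'.
apply/subset_leq_card/subsetP => z /setDP [zJ' zJ].
rewrite inE /addind zJ; apply/andP; split.
  by have := subsetP sJ'JC z zJ'; rewrite inE (negbTE zJ).
by apply: indep_subset indJ'; rewrite subUset sub1set zJ' sJJ'.
Qed.

Lemma leq_card_swapind (I X : {set E}) : indep I -> indep X ->
  {in X, forall x, ~~ addind indep I x} ->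
  #|X| <= #|[set d in I | [exists x in X, swapind indep I d x]]|.
Proof.
move=> indI indX notaddX; set K := [set d in I | _].
rewrite leqNgt; apply/negP => ltKX.
have sKI : K \subset I by apply/subsetP => d; rewrite inE => /andP [].
have [x /setDP [xX xK] indxK] := indep_augment (indep_subset sKI indI) indX ltKX.
have xI : x \notin I.
  apply: contra xK => xI; rewrite inE xI; apply/existsP; exists x.
  by rewrite xX /swapind /addind setD11 setD1K.
have depxI : ~~ indep (x |: I) by have := notaddX x xX; rewrite /addind xI.
have ltKI : #|K| < #|I|.
  rewrite ltn_neqAle subset_leq_card // andbT; apply/negP => /eqP cardK.
  suff eKI : K = I by rewrite -eKI indxK in depxI.
  by apply/eqP; rewrite eqEcard sKI cardK leqnn.
have ltxKI : #|x |: K| <= #|I| by rewrite cardsU1 xK add1n.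
have [J' [sxKJ' sJ' indJ' cardJ']] := indep_extend indI indxK ltxKI.
have xJ' : x \in J' by apply: (subsetP sxKJ'); rewrite setU11.
have [d dI dJ'] : exists2 d, d \in I & d \notin J'.
  apply/subsetPn; apply: contraNN depxI => sIJ'.
  by apply: indep_subset indJ'; rewrite subUset sub1set xJ'.
(* J' lies in x |: (I :\ d) and has the same size, so it is that set. *)
have eJ' : J' = x |: (I :\ d).
  apply/eqP; rewrite eqEcard cardJ' cardsU1 in_setD1 (negbTE xI) andbF add1n.
  rewrite (cardsD1 d I) dI leqnn andbT; apply/subsetP => z zJ'.
  have zd : z != d by apply: contraNneq dJ' => <-.
  rewrite in_setU1 in_setD1 zd /=; have := subsetP sJ' z zJ'.
  rewrite in_setU in_setU1.
  by case/orP => [/orP [-> // | /(subsetP sKI) ->] | ->]; rewrite orbT.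
have dK : d \in K.
  rewrite inE dI; apply/existsP; exists x.
  by rewrite xX /swapind /addind -eJ' indJ' in_setD1 (negbTE xI) andbF.
by have := subsetP sxKJ' d (setU1r x dK); rewrite (negbTE dJ').
Qed.

Lemma basis_card (n : nat) (C : {set E}) :
  matroid_rank indep n -> is_basis indep C -> #|C| = n.
Proof.
case=> [[A indA <-] maxA] [indC maxC]; apply/eqP; rewrite eqn_leq maxA //=.
rewrite leqNgt; apply/negP => /(indep_augment indC indA) [x /setDP [_ xC]].
by apply/negP: (maxC x xC).
Qed.

End MatroidCounting.

Lemma leq_card_partial_image (I T : finType) (h : I -> option T) (P : {set I})
    (D : {set T}) :
  {in D, forall d, exists2 p, p \in P & h p = Some d} -> #|D| <= #|P|.
Proof.
move=> coverD; rewrite -(card_imset D (@Some_inj _)).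
apply: leq_trans (leq_imset_card h P); apply/subset_leq_card/subsetP.
by move=> _ /imsetP [d dD ->]; have [p pP <-] := coverD d dD; apply: imset_f.
Qed.

Lemma leq_mul_card_fibers (I J : finType) (R : {set I * J}) (C : {set J}) k :
  {in C, forall c, k <= #|[set p in R | p.2 == c]|} -> #|C| * k <= #|R|.
Proof.
move=> geC; rewrite -sum_nat_const.
apply: (@leq_trans (\sum_(c in C) #|[set p in R | p.2 == c]|)); first exact: leq_sum.
have -> : #|R| = \sum_c #|[set p in R | p.2 == c]|.
  rewrite -sum1_card (partition_big (fun p => p.2) predT) //=.
  by apply: eq_bigr => c _; rewrite sum1dep_card.
by rewrite [X in _ <= X](bigID (mem C)) /= leq_addr.
Qed.

Section TableUpdate.
Variables (E : finType) (indep : {set E} -> bool) (f n : nat).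
Variable B : 'I_f -> 'I_n -> {set E}.
Hypothesis hM : matroid indep.
Hypothesis hdisj :
  forall p q : 'I_f * 'I_n, p != q -> [disjoint B p.1 p.2 & B q.1 q.2].
Implicit Type T : table E f n.

Lemma mem_row_set T j c x : T j c = Some x -> x \in row_set T j.
Proof. by move=> Tjc; rewrite inE; apply/existsP; exists c; rewrite Tjc. Qed.

Lemma mem_col_set T j c x : T j c = Some x -> x \in col_set T c.
Proof. by move=> Tjc; rewrite inE; apply/existsP; exists j; rewrite Tjc. Qed.

Lemma valid_entry_inj T j c j' c' x : valid_table indep B T ->
  T j c = Some x -> T j' c' = Some x -> (j, c) = (j', c').
Proof.
case=> inB _ _ /inB xB /inB xB'; have [//|ne] := eqVneq (j, c) (j', c').
by have := disjointFr (hdisj ne) xB; rewrite /= xB'.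
Qed.

Definition upd_table T j c (x : E) : table E f n :=
  fun j' c' => if (j' == j) && (c' == c) then Some x else T j' c'.

Definition entry_set (o : option E) : {set E} :=
  if o is Some x then [set x] else set0.

Lemma row_set_upd_other T j c x j' :
  j' != j -> row_set (upd_table T j c x) j' = row_set T j'.
Proof. by move=> ne; apply/setP => z; rewrite !inE /upd_table (negbTE ne). Qed.

Lemma col_set_upd_other T j c x c' :
  c' != c -> col_set (upd_table T j c x) c' = col_set T c'.
Proof.
move=> ne; apply/setP => z; rewrite !inE.
by apply: eq_existsb => j'; rewrite /upd_table (negbTE ne) andbF.
Qed.

Lemma row_set_upd T j c x : valid_table indep B T ->
  row_set (upd_table T j c x) j \subset x |: (row_set T j :\: entry_set (T j c)).
Proof.
move=> vT; apply/subsetP => z; rewrite inE => /existsP [c' /eqP].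
rewrite /upd_table eqxx /=; case: eqP => [_ [<-] | /eqP ne Tjc']; first exact: setU11.
apply/setU1r/setDP; split; first exact: mem_row_set Tjc'.
case Tjc: (T j c) => [w|]; rewrite inE //; apply: contra ne => /eqP ezw.
by rewrite ezw in Tjc'; have /(congr1 snd) /= -> := valid_entry_inj vT Tjc' Tjc.
Qed.

Lemma col_set_upd T j c x : valid_table indep B T ->
  col_set (upd_table T j c x) c \subset x |: (col_set T c :\: entry_set (T j c)).
Proof.
move=> vT; apply/subsetP => z; rewrite inE => /existsP [j' /eqP].
rewrite /upd_table eqxx andbT; case: eqP => [_ [<-] | /eqP ne Tj'c]; first exact: setU11.
apply/setU1r/setDP; split; first exact: mem_col_set Tj'c.
case Tjc: (T j c) => [w|]; rewrite inE //; apply: contra ne => /eqP ezw.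
by rewrite ezw in Tj'c; have /(congr1 fst) /= -> := valid_entry_inj vT Tj'c Tjc.
Qed.

Lemma valid_upd T j c x : valid_table indep B T -> x \in B j c ->
  indep (x |: (row_set T j :\: entry_set (T j c))) ->
  indep (x |: (col_set T c :\: entry_set (T j c))) ->
  valid_table indep B (upd_table T j c x).
Proof.
move=> vT xB indRow indCol; have [inB indR indC] := vT; split.
- move=> j' c' z; rewrite /upd_table.
  by case: andP => [[/eqP-> /eqP->] [<-] // | _]; apply: inB.
- move=> j'; have [->|ne] := eqVneq j' j; last by rewrite row_set_upd_other.
  exact: (indep_subset hM (row_set_upd _ _ _ vT) indRow).
- move=> c'; have [->|ne] := eqVneq c' c; last by rewrite col_set_upd_other.
  exact: (indep_subset hM (col_set_upd _ _ _ vT) indCol).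
Qed.

Lemma num_filled_upd T j c x :
  num_filled (upd_table T j c x) = (T j c == None) + num_filled T.
Proof.
rewrite /num_filled.
have -> : [set p | upd_table T j c x p.1 p.2 != None] =
          (j, c) |: [set p | T p.1 p.2 != None].
  apply/setP => -[j' c']; rewrite !inE /upd_table xpair_eqE /=.
  by case: ifP.
by rewrite cardsU1 inE negbK.
Qed.

End TableUpdate.

Section MaximalTable.
Variables (E : finType) (indep : {set E} -> bool) (f n : nat).
Variable B : 'I_f -> 'I_n -> {set E}.
Hypotheses (hM : matroid indep) (hrank : matroid_rank indep n).
Hypothesis hB : forall i j, is_basis indep (B i j).
Hypothesis hdisj :
  forall p q : 'I_f * 'I_n, p != q -> [disjoint B p.1 p.2 & B q.1 q.2].
Variables (T : table E f n) (i : 'I_f) (b : 'I_n).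
Hypotheses (hT : valid_table indep B T) (hib : T i b = None).
Hypothesis hmax :
  ~ exists2 T' : table E f n, valid_table indep B T' & num_filled T < num_filled T'.

Lemma row_not_indep y : y \in B i b -> addind indep (col_set T b) y ->
  ~~ indep (y |: row_set T i).
Proof.
move=> yB /andP [_ indyC]; apply/negP => indyS; apply: hmax.
exists (upd_table T i b y); last by rewrite num_filled_upd hib eqxx.
by apply: valid_upd; rewrite // hib /= setD0.
Qed.

Lemma col_not_addind c x' y x : T i c = Some x' -> y \in B i b ->
  addind indep (col_set T b) y -> x \in B i c ->
  addind indep (y |: (row_set T i :\ x')) x -> ~~ addind indep (col_set T c) x.
Proof.
move=> Tic yB /andP [_ indyCb] xB /andP [_ indxJ].
apply/negP => /andP [_ indxC]; apply: hmax.
have bc : b != c by apply/eqP => ebc; move: hib; rewrite ebc Tic.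
(* x is written first: writing y alone at (i,b) would not give a valid table. *)
set T1 := upd_table T i c x.
have sRow1 : row_set T1 i \subset x |: (row_set T i :\ x').
  by have := row_set_upd hdisj i c x hT; rewrite Tic.
have vT1 : valid_table indep B T1.
  apply: valid_upd; rewrite // Tic /=.
  - by apply: (indep_subset hM) indxJ; apply: setUS; apply: subsetUr.
  - by apply: (indep_subset hM) indxC; apply: setUS; apply: subsetDl.
have T1ib : T1 i b = None by rewrite /T1 /upd_table eqxx (negbTE bc).
exists (upd_table T1 i b y).
  apply: valid_upd; rewrite // T1ib /= setD0.
  - by apply: (indep_subset hM) indxJ; rewrite setUCA; apply: setUS.
  - by rewrite col_set_upd_other.
by rewrite num_filled_upd T1ib /T1 num_filled_upd Tic.
Qed.

Definition removable_set : {set 'I_f * 'I_n} :=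
  [set p | `[< removable indep B T i b p.1 p.2 >]].

Lemma leq_card_removable_col c x' y : T i c = Some x' -> y \in B i b ->
  addind indep (col_set T b) y -> swapind indep (row_set T i) x' y ->
  n - #|row_set T i| <= #|[set p in removable_set | p.2 == c]|.
Proof.
move=> Tic yB yCb yS; have [_ _ indC] := hT.
set J := y |: (row_set T i :\ x').
set X := [set x in B i c | addind indep J x].
have cardJ : #|J| = #|row_set T i|.
  case/andP: yS => yS' _.
  by rewrite cardsU1 yS' (cardsD1 x' (row_set T i)) (mem_row_set Tic).
have cardX : n - #|row_set T i| <= #|X|.
  rewrite -cardJ -(basis_card hM hrank (hB i c)).
  by apply: leq_card_addind => //; [case/andP: yS | case: (hB i c)].
have indX : indep X.
  by apply: (indep_subset hM) (proj1 (hB i c)); apply/subsetP => x; rewrite inE => /andP [].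
have notaddX : {in X, forall x, ~~ addind indep (col_set T c) x}.
  by move=> x; rewrite inE => /andP [xB xJ]; apply: col_not_addind Tic yB yCb xB xJ.
apply: leq_trans cardX (leq_trans (leq_card_swapind hM (indC c) indX notaddX) _).
apply: (leq_card_partial_image (h := fun p => T p.1 p.2)) => d.
rewrite inE => /andP [dC /existsP [x /andP [xX xd]]].
move: dC; rewrite inE => /existsP [j /eqP Tjc].
exists (j, c) => //; rewrite !inE eqxx andbT; apply/asboolP.
exists d; split => //; exists x => //.
move: xX; rewrite inE => /andP [xB xJ]; split => //; rewrite Tic.
by exists y => //; split => //; apply/andP.
Qed.

Lemma leq_card_removable_set :
  (n - #|row_set T i|) * (n - #|col_set T b|) <= #|removable_set|.
Proof.
have [_ indR indC] := hT.
set Y := [set y in B i b | addind indep (col_set T b) y].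
have cardY : n - #|col_set T b| <= #|Y|.
  have := leq_card_addind hM (indC b) (proj1 (hB i b)).
  by rewrite (basis_card hM hrank (hB i b)).
have indY : indep Y.
  by apply: (indep_subset hM) (proj1 (hB i b)); apply/subsetP => y; rewrite inE => /andP [].
have notaddY : {in Y, forall y, ~~ addind indep (row_set T i) y}.
  move=> y; rewrite inE => /andP [yB yCb].
  by rewrite /addind negb_and (row_not_indep yB yCb) orbT.
set A := [set d in row_set T i | [exists y in Y, swapind indep (row_set T i) d y]].
set Cols := [set c | [exists d in A, T i c == Some d]].
have cardCols : #|A| <= #|Cols|.
  apply: (leq_card_partial_image (h := T i)) => d dA.
  move: (dA); rewrite inE => /andP [+ _]; rewrite inE => /existsP [c /eqP Tic].
  by exists c => //; rewrite inE; apply/existsP; exists d; rewrite dA Tic eqxx.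
apply: (@leq_trans (#|Cols| * (n - #|row_set T i|))).
  rewrite mulnC leq_mul2r; apply/orP; right.
  exact: leq_trans cardY (leq_trans (leq_card_swapind hM (indR i) indY notaddY) cardCols).
apply: leq_mul_card_fibers => c; rewrite inE => /existsP [d /andP [dA /eqP Tic]].
move: dA; rewrite inE => /andP [_ /existsP [y /andP [yY yd]]].
move: yY; rewrite inE => /andP [yB yCb].
exact: leq_card_removable_col Tic yB yCb yd.
Qed.

End MaximalTable.

Theorem mainTheorem6 (E : finType) (indep : {set E} -> bool) (n f : nat)
  (B : 'I_f -> 'I_n -> {set E})
  (hM : matroid indep) (hrank : matroid_rank indep n)
  (hf0 : 0 < f) (hfn : f <= n)
  (hB : forall i j, is_basis indep (B i j))
  (hdisj : forall (p q : 'I_f * 'I_n), p != q -> [disjoint B p.1 p.2 & B q.1 q.2])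
  (T : table E f n) (hT : valid_table indep B T)
  (i : 'I_f) (b : 'I_n) (hib : T i b = None) :
  (exists2 T' : table E f n, valid_table indep B T' & num_filled T < num_filled T')
  \/
  (exists R : {set 'I_f * 'I_n},
     (n - #|row_set T i|) * (n - #|col_set T b|) <= #|R| /\
     (forall p, p \in R -> removable indep B T i b p.1 p.2)).
Proof.
have [augment | hmax] :=
  pselect (exists2 T' : table E f n, valid_table indep B T' & num_filled T < num_filled T').
  by left.
right; exists (removable_set indep B T i b); split.
  exact: (leq_card_removable_set hM hrank hB hdisj hT hib hmax).
by move=> p; rewrite inE => /asboolP.
Qed.
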